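(* Let $q$ be a prime power and $k\ge3$, $h\ge2$ integers, and $1\le u_0<u_1\le\dots\le u_h$ integers. Let $U_0,U_1,\dots,U_h$ be subspaces of $\mathbf F_q^k$ of dimensions $u_0,u_1,\dots,u_h$ with $U_i\cap U_j=U_0$ for all distinct $i,j\in\{1,\dots,h\}$, and assume $q^k-q^{k-1}>q^{u_0}-1+\sum_{i=1}^h(q^{u_i}-q^{u_0})$. Let $U$ be the set of nonzero vectors of $\mathbf F_q^k$ not in $U_1\cup\dots\cup U_h$, let $\widetilde G$ be a matrix whose columns consist of exactly one representative of each class $\{\lambda\mathbf v:\lambda\in\mathbf F_q^*\}$, $\mathbf v\in U$, and let $\mathbf C$ be the linear code with generator matrix $\widetilde G$. If $h\le q^{u_1-u_0}$, then $\mathbf C$ is a linear $\big[\frac{(q^k-q^{u_0})-\sum_{i=1}^h(q^{u_i}-q^{u_0})}{q-1},\,k,\,q^{k-1}-\sum_{i=1}^hq^{u_i-1}\big]_q$ code (its minimum distance equals $q^{k-1}-\sum_{i=1}^hq^{u_i-1}$). *)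

From HB Require Import structures.
From mathcomp Require Import all_boot all_order all_algebra all_field.
Set Implicit Arguments. Unset Strict Implicit. Unset Printing Implicit Defensive.
Import GRing.Theory Num.Theory.
Local Open Scope ring_scope.

Definition hwt (F : fieldType) (n : nat) (c : 'rV[F]_n) : nat :=
  #|[set j : 'I_n | c 0 j != 0]|.

Definition codeword (F : fieldType) (k n : nat) (G : 'M[F]_(k, n)) (c : 'rV[F]_n) : Prop :=
  exists m : 'rV[F]_k, c = m *m G.

Definition is_min_distance (F : fieldType) (k n : nat) (G : 'M[F]_(k, n)) (d : int) : Prop :=
  (exists c, codeword G c /\ c != 0 /\ (hwt c)%:Z = d) /\
  (forall c, codeword G c -> c != 0 -> d <= (hwt c)%:Z).

(* For a message m, the weight of m G counts the columns off the hyperplane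
   H_m = {v | v m^T = 0}.  The columns represent every projective point outside
   U_1 u ... u U_h exactly once, so (q - 1) wt(m G) is the number of vectors off
   H_m minus those of the union lying off H_m.  The U_i form a sunflower with
   kernel U_0, which makes the union countable by inclusion-exclusion, and a
   subspace V has either 0 or (q - 1) q^(dim V - 1) vectors off H_m.  Hence
   wt(m G) >= q^(k-1) - sum_i q^(u_i - 1), with equality when H_m contains U_0
   but no U_i; such an m exists because the messages m with U_i <= H_m form a
   space of size q^(k - u_i), and h >= 2 of those, all containing 0, cannot
   cover the one of size q^(k - u_0) when h <= q^(u_1 - u_0).  The same count
   applied to all vectors gives the length, and a positive minimum weight gives
   full rank. *)

From HB Require Import structures.
From mathcomp Require Import all_boot all_order all_algebra all_field.
From mathcomp Require Import zify lra.
Set Implicit Arguments. Unset Strict Implicit. Unset Printing Implicit Defensive.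
Import GRing.Theory Num.Theory.

Lemma nondecreasing_leq (u : nat -> nat) a b :
  (forall i, a <= i -> i < b -> u i <= u i.+1) -> forall i, a <= i <= b -> u a <= u i.
Proof.
move=> step; elim=> [|i IH] /andP[le_ai le_ib].
  by move: le_ai; rewrite leqn0 => /eqP ->.
case: ltngtP le_ai => [lt_ai _ | // | -> //].
by apply: leq_trans (IH _) (step i lt_ai le_ib); rewrite -ltnS lt_ai ltnW.
Qed.

Lemma pred_card_gt0 (F : finFieldType) : 0 < #|F|.-1.
Proof. by have := finNzRing_gt1 F; case: #|F| => [|[|q]]. Qed.

Section UnionCount.
Variables (T : finType) (A : nat -> {set T}) (C : {set T}).

Lemma card_bigcup_sunflower t :
  (forall i j, i < j <= t -> A i :&: A j = C) ->
  #|\bigcup_(i < t.+1) A i| + t * #|C| = \sum_(i < t.+1) #|A i|.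
Proof.
elim: t => [|t IH] sunflower; first by rewrite !big_ord1 addn0.
rewrite big_ord_recr [RHS]big_ord_recr /= -IH => [|i j /andP[lt_ij le_jt]]; last first.
  by apply: sunflower; rewrite lt_ij ltnW.
set X := \bigcup_(i < t.+1) A i.
have XA : X :&: A t.+1 = C.
  apply/setP => v; apply/setIP/idP => [[/bigcupP[i _ vAi] vA]|vC].
    by rewrite -(sunflower i t.+1) ?inE ?vAi ?vA ?ltn_ord ?leqnn.
  have /setIP[vA0 vA] : v \in A 0 :&: A t.+1 by rewrite sunflower ?leqnn.
  by split=> //; apply/bigcupP; exists ord0.
by have := cardsUI X (A t.+1); rewrite XA mulSn; lia.
Qed.

Lemma card_bigcup_common t :
  (forall i, C \subset A i) ->
  #|\bigcup_(i < t.+1) A i| + t * #|C| <= \sum_(i < t.+1) #|A i|.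
Proof.
move=> CA; elim: t => [|t IH]; first by rewrite !big_ord1 addn0.
rewrite big_ord_recr [X in _ <= X]big_ord_recr /=.
apply: leq_trans (leq_add IH (leqnn #|A t.+1|)).
set X := \bigcup_(i < t.+1) A i.
have C_XA : #|C| <= #|X :&: A t.+1|.
  apply/subset_leq_card; rewrite subsetI CA andbT.
  exact: subset_trans (CA 0) (bigcup_sup ord0 isT).
have := cardsUI X (A t.+1); rewrite mulSn; lia.
Qed.
End UnionCount.

Local Open Scope ring_scope.

Section Hyperplanes.
Variables (F : finFieldType) (k : nat).
Implicit Types (m v : 'rV[F]_k) (V W : {vspace 'rV[F]_k}).

Definition hyperplane m : {vspace 'rV[F]_k} := lker (linfun (mulmxr m^T)).

Lemma mem_hyperplane m v : (v \in hyperplane m) = ((v *m m^T) 0 0 == 0).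
Proof.
rewrite memv_ker lfunE /=; apply/eqP/eqP => [-> | v0]; first by rewrite mxE.
by apply/matrixP => i j; rewrite !ord1 v0 mxE.
Qed.

Lemma hyperplane0 : hyperplane 0 = fullv.
Proof.
by apply/eqP; rewrite eqEsubv subvf; apply/subvP => v _; rewrite mem_hyperplane trmx0 mulmx0 mxE.
Qed.

Lemma setI_vspace V W : [set v in V] :&: [set v in W] = [set v in (V :&: W)%VS].
Proof. by apply/setP => v; rewrite !inE memv_cap. Qed.

Lemma card_vspace_diff0 V : #|[set v in V] :\: [set 0]| = (#|F| ^ \dim V)%N.-1.
Proof.
have V0 : [set v in V] :&: [set 0] = [set 0].
  by apply/setP => v; rewrite !inE andb_idl // => /eqP ->; apply: mem0v.
have cardV : #|[set v in V]| = (#|F| ^ \dim V)%N by rewrite cardsE card_vspace.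
by have := cardsID [set 0] [set v in V]; rewrite V0 cards1 cardV => <-.
Qed.

Lemma dim_cap_hyperplane V m :
  \dim (V :&: hyperplane m) = if (V <= hyperplane m)%VS then \dim V else (\dim V).-1.
Proof.
case: ifP => [/capv_idPl -> // | VnH].
have img_le1 : (\dim (linfun (mulmxr m^T) @: V) <= 1)%N.
  by rewrite (leq_trans (dimvS (subvf _))) // dimvf /dim /= muln1.
have img_gt0 : (0 < \dim (linfun (mulmxr m^T) @: V))%N.
  by rewrite lt0n dimv_eq0 -lkerE VnH.
have := limg_ker_dim (linfun (mulmxr m^T)) V; rewrite -/(hyperplane m).
have -> : \dim (linfun (mulmxr m^T) @: V) = 1%N by apply/eqP; rewrite eqn_leq img_le1.
by move=> <-; rewrite addn1.
Qed.

Lemma dim_hyperplane m : m != 0 -> \dim (hyperplane m) = k.-1.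
Proof.
move=> m_nz; have [j mj_nz] : exists j, m 0 j != 0.
  apply/existsP; apply: contraNT m_nz => /existsPn m0.
  by apply/eqP/rowP => j; rewrite mxE; apply/eqP/negPn/m0.
have full_nH : ~~ (fullv <= hyperplane m)%VS.
  apply/negP => /subvP/(_ (delta_mx 0 j) (memvf _)).
  by rewrite mem_hyperplane -rowE !mxE (negbTE mj_nz).
by rewrite -[hyperplane m]capfv dim_cap_hyperplane (negbTE full_nH) dimvf /dim /= mul1n.
Qed.

Lemma card_compl_hyperplane m :
  m != 0 -> #|~: [set v in hyperplane m]| = (#|F|.-1 * #|F| ^ k.-1)%N.
Proof.
move=> m_nz; have k_gt0 : (0 < k)%N.
  rewrite lt0n; apply: contraNneq m_nz => k0.
  by apply/eqP/rowP => j; have := ltn_ord j; rewrite {2}k0.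
have := cardsC [set v in hyperplane m]; rewrite cardsE card_vspace dim_hyperplane //.
rewrite card_mx mul1n -[in X in _ = X](prednK k_gt0) expnS.
by case: #|F| => [|q] /=; rewrite ?mul0n ?mulSn; lia.
Qed.

Lemma card_diff_hyperplane V m :
  #|[set v in V] :\: [set v in hyperplane m]|
    = if (V <= hyperplane m)%VS then 0%N else (#|F|.-1 * #|F| ^ (\dim V).-1)%N.
Proof.
rewrite cardsD setI_vspace !cardsE !card_vspace dim_cap_hyperplane.
case: ifPn => [_|VnH]; first by rewrite subnn.
have /prednK <- : (0 < \dim V)%N.
  by rewrite lt0n dimv_eq0; apply: contraNneq VnH => ->; apply: sub0v.
by rewrite expnS; case: #|F| => [|q] /=; rewrite ?mulSn ?addKn.
Qed.

Lemma card_mulmx_eq0 w (A : 'M[F]_(k, w)) :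
  row_full A -> #|[set m : 'rV[F]_k | m *m A == 0]| = (#|F| ^ (k - w))%N.
Proof.
case/row_fullP => X XA1; pose T := linfun (mulmxr A) : 'Hom('rV[F]_k, 'rV[F]_w).
have img_full : (T @: fullv = fullv)%VS.
  apply/eqP; rewrite eqEsubv subvf; apply/subvP => y _.
  have -> : y = T (y *m X) by rewrite lfunE /= -mulmxA XA1 mulmx1.
  exact/memv_img/memvf.
have := limg_ker_dim T fullv; rewrite capfv img_full !dimvf /dim /= !mul1n => dimT.
have -> : [set m : 'rV[F]_k | m *m A == 0] = [set m in lker T].
  by apply/setP => m; rewrite !inE memv_ker lfunE.
by rewrite cardsE card_vspace -(addnK w (\dim (lker T))) dimT.
Qed.

Definition basis_mx W : 'M[F]_(\dim W, k) := \matrix_(i, j) (vbasis W)`_i 0 j.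

Lemma row_free_basis_mx W : row_free (basis_mx W).
Proof.
apply: inj_row_free => x; rewrite mulmx_sum_row => x_comb.
have /freeP/(_ (x 0)) x0 := basis_free (vbasisP W).
apply/rowP => i; rewrite mxE x0 //; rewrite -[RHS]x_comb.
by apply: eq_bigr => t _; congr (_ *: _); apply/rowP => j; rewrite !mxE.
Qed.

Lemma sub_hyperplaneE W m : (W <= hyperplane m)%VS = (m *m (basis_mx W)^T == 0).
Proof.
have entry i : (m *m (basis_mx W)^T) 0 i = ((vbasis W)`_i *m m^T) 0 0.
  by rewrite !mxE; apply: eq_bigr => j _; rewrite !mxE mulrC.
rewrite -{1}(span_basis (vbasisP W)); apply/span_subvP/eqP => [WH | mB0 v].
  by apply/rowP => i; rewrite entry [RHS]mxE; apply/eqP; rewrite -mem_hyperplane WH ?memt_nth.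
by case/tnthP => i ->; rewrite (tnth_nth 0) mem_hyperplane -entry mB0 mxE.
Qed.

Lemma card_annihilator W :
  #|[set m | (W <= hyperplane m)%VS]| = (#|F| ^ (k - \dim W))%N.
Proof.
rewrite -(@card_mulmx_eq0 _ (basis_mx W)^T); last first.
  by rewrite /row_full mxrank_tr; apply: row_free_basis_mx.
by apply: eq_card => m; rewrite !inE sub_hyperplaneE.
Qed.

Lemma exists_separating_hyperplane (U : nat -> {vspace 'rV[F]_k}) h d :
  (2 <= h)%N -> (\dim (U 0%N) <= d)%N ->
  (forall i, (1 <= i <= h)%N -> (d <= \dim (U i))%N) ->
  (h <= #|F| ^ (d - \dim (U 0%N)))%N ->
  exists m, (U 0%N <= hyperplane m)%VS /\
            forall i, (1 <= i <= h)%N -> ~~ (U i <= hyperplane m)%VS.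
Proof.
move=> h_ge2 le_U0d le_dU le_h; have q_gt0 : (0 < #|F|)%N := ltnW (finNzRing_gt1 F).
have h_gt0 : (0 < h)%N := ltnW h_ge2.
pose A i := [set m | (U i <= hyperplane m)%VS].
have le_dk : (d <= k)%N.
  apply: leq_trans (le_dU 1%N _) _; first by rewrite /= ltnW.
  by have := dimvS (subvf (U 1%N)); rewrite dimvf /dim /= mul1n.
have le_A i : (1 <= i <= h)%N -> (#|A i| <= #|F| ^ (k - d))%N.
  by move=> ih; rewrite card_annihilator leq_pexp2l ?leq_sub2l ?le_dU.
have zero_A i : [set 0] \subset A i.
  by rewrite sub1set inE hyperplane0 subvf.
have := @card_bigcup_common _ (fun i => A i.+1) _ h.-1 (fun i => zero_A i.+1).
rewrite prednK // cards1 muln1 => le_union.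
have le_sum : (\sum_(i < h) #|A i.+1| <= h * #|F| ^ (k - d))%N.
  rewrite -[h in (h * _)%N]card_ord -sum_nat_const.
  by apply: leq_sum => i _; rewrite le_A ?ltn_ord.
have lt_A0 : (#|\bigcup_(i < h) A i.+1| < #|A 0%N|)%N.
  have : (h * #|F| ^ (k - d) <= #|A 0%N|)%N.
    rewrite card_annihilator (_ : k - \dim (U 0%N) = (k - d) + (d - \dim (U 0%N)))%N; last by lia.
    by rewrite expnD mulnC leq_mul2l le_h orbT.
  lia.
have [m A0m m_nU] : exists2 m, m \in A 0%N & m \notin \bigcup_(i < h) A i.+1.
  by apply/subsetPn; apply: contraL lt_A0 => /subset_leq_card; rewrite leqNgt.
exists m; split=> [|i /andP[i_gt0 le_ih]]; first by rewrite inE in A0m.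
have lt_ih : (i.-1 < h)%N by rewrite prednK.
by apply: contra m_nU => Uim; apply/bigcupP; exists (Ordinal lt_ih); rewrite ?inE /= ?prednK.
Qed.
End Hyperplanes.

Section ScalarClasses.
Variables (F : finFieldType) (V : finLmodType F) (I : finType) (c : I -> V) (S : {set V}).
Hypothesis S0 : 0 \notin S.
Hypothesis scaleS : forall a v, a != 0 -> v \in S -> a *: v \in S.
Hypothesis classS : forall v, v \in S -> exists! j, exists a, v = a *: c j.

Lemma card_scale_classes : #|S| = (#|[set j | c j \in S]| * #|F|.-1)%N.
Proof.
have c_nz j : c j \in S -> c j != 0 by apply: contraTneq => ->.
pose f (x : I * F) := x.2 *: c x.1.
have imf : S = f @: setX [set j | c j \in S] [set~ 0].
  apply/setP => v; apply/idP/imsetP => [vS | [[j a]]]; last first.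
    by rewrite !inE /= => /andP[cjS a_nz] ->; apply: scaleS.
  have [j [[a def_v] _]] := classS vS.
  have a_nz : a != 0 by apply: contraNneq S0 => a0; rewrite -(scale0r (c j)) -a0 -def_v.
  have cjS : c j \in S by rewrite -[c j](scalerK a_nz) -def_v scaleS ?invr_eq0.
  by exists (j, a); rewrite ?inE /= ?cjS ?a_nz.
rewrite {1}imf card_in_imset ?cardsX ?cardsC1 // => -[j1 a1] [j2 a2].
rewrite !inE /= /f /= => /andP[cj1S a1_nz] /andP[_ a2_nz] eq_f.
have [j0 [_ uniq_j0]] := classS (scaleS a1_nz cj1S).
have j01 : j0 = j1 by apply: uniq_j0; exists a1.
have j02 : j0 = j2 by apply: uniq_j0; exists a2; rewrite eq_f.
subst j1 j2; congr (_, _); apply/eqP; rewrite -subr_eq0.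
have := scaler_eq0 (a1 - a2) (c j0).
by rewrite (negbTE (c_nz _ cj1S)) orbF scalerBl eq_f subrr eqxx => <-.
Qed.
End ScalarClasses.

Lemma hwt_mulmx (F : finFieldType) k n (G : 'M[F]_(k, n)) (m : 'rV[F]_k) :
  hwt (m *m G) = #|[set j | (col j G)^T \notin hyperplane m]|.
Proof.
apply: eq_card => j; rewrite !inE mem_hyperplane !mxE.
by congr (_ != 0); apply: eq_bigr => i _; rewrite !mxE mulrC.
Qed.

Section ProjectiveSystem.
Variables (F : finFieldType) (k n h : nat) (U : nat -> {vspace 'rV[F]_k}).
Variable G : 'M[F]_(k, n).
Hypothesis col_outside : forall j : 'I_n, (col j G)^T != 0 /\
  forall i, (1 <= i <= h)%N -> (col j G)^T \notin U i.
Hypothesis col_unique : forall v : 'rV[F]_k, v != 0 ->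
  (forall i, (1 <= i <= h)%N -> v \notin U i) ->
  exists! j : 'I_n, exists a : F, v = a *: (col j G)^T.

Let Ucup := \bigcup_(i < h) [set v in U i.+1].
Let outside := ~: [set 0] :\: Ucup.

Lemma notin_UcupP v : reflect (forall i, (1 <= i <= h)%N -> v \notin U i) (v \notin Ucup).
Proof.
apply: (iffP idP) => [vU i /andP[i_gt0 le_ih] | vU]; last first.
  by apply/bigcupP => -[i _]; rewrite inE; apply/negP/vU; rewrite /= ltn_ord.
have lt_ih : (i.-1 < h)%N by rewrite prednK.
by apply: contra vU => vUi; apply/bigcupP; exists (Ordinal lt_ih); rewrite ?inE /= ?prednK.
Qed.

Lemma card_outside_pred (P : pred 'rV[F]_k) :
  (forall a v, a != 0 -> P (a *: v) = P v) ->
  #|outside :&: [set v | P v]| = (#|[set j | P (col j G)^T]| * #|F|.-1)%N.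
Proof.
move=> scaleP; have memS v : v \in outside :&: [set v | P v] =
    [&& v != 0, v \notin Ucup & P v].
  by rewrite !inE [_ && (v != 0)]andbC -andbA.
have S0 : 0 \notin outside :&: [set v | P v] by rewrite memS eqxx.
have scaleS a v : a != 0 -> v \in outside :&: [set v | P v] ->
    a *: v \in outside :&: [set v | P v].
  rewrite !memS => a_nz /and3P[v_nz /notin_UcupP vU Pv].
  rewrite scaler_eq0 negb_or a_nz v_nz scaleP //=; apply/andP; split=> //.
  by apply/notin_UcupP => i /vU; rewrite rpredZeq negb_or a_nz.
have classS v : v \in outside :&: [set v | P v] ->
    exists! j, exists a, v = a *: (col j G)^T.
  by rewrite memS => /and3P[v_nz /notin_UcupP vU _]; apply: col_unique.
rewrite (card_scale_classes S0 scaleS classS); congr (_ * _)%N.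
apply: eq_card => j; rewrite inE memS inE.
by have [-> /notin_UcupP ->] := col_outside j.
Qed.

Hypothesis sunflowerU : forall i j, (1 <= i <= h)%N -> (1 <= j <= h)%N -> i != j ->
  (U i :&: U j)%VS = U 0%N.

Lemma card_Ucup_diff (B : {set 'rV[F]_k}) :
  (#|Ucup :\: B| + h.-1 * #|[set v in U 0%N] :\: B|
     = \sum_(1 <= i < h.+1) #|[set v in U i] :\: B|)%N.
Proof.
rewrite big_add1 big_mkord /=; have [h0|h_gt0] := posnP h.
  by rewrite /Ucup h0 !big_ord0 set0D cards0.
have UcupB : Ucup :\: B = \bigcup_(i < h) ([set v in U i.+1] :\: B).
  apply/setP => v; rewrite inE; apply/andP/bigcupP => [[vB /bigcupP[i _ vU]] | [i _]].
    by exists i; rewrite // inE vB.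
  by rewrite inE => /andP[vB vU]; split=> //; apply/bigcupP; exists i.
have sunB i j : (i < j <= h.-1)%N ->
    ([set v in U i.+1] :\: B) :&: ([set v in U j.+1] :\: B) = [set v in U 0%N] :\: B.
  move=> /andP[lt_ij le_j]; have lt_jh : (j < h)%N by rewrite -ltnS prednK in le_j.
  by rewrite -setDIl setI_vspace sunflowerU ?eqSS ?(ltn_eqF lt_ij) ?(ltn_trans lt_ij).
by have := card_bigcup_sunflower sunB; rewrite prednK // UcupB.
Qed.

Lemma weight_defect m : m != 0 ->
  let H := [set v in hyperplane m] in
  (hwt (m *m G) * #|F|.-1 + \sum_(1 <= i < h.+1) #|[set v in U i] :\: H|
     = #|F|.-1 * #|F| ^ k.-1 + h.-1 * #|[set v in U 0%N] :\: H|)%N.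
Proof.
move=> m_nz H; have scaleP a v : a != 0 -> (a *: v \notin hyperplane m) = (v \notin hyperplane m).
  by move=> a_nz; rewrite rpredZeq (negbTE a_nz).
have := card_outside_pred scaleP; rewrite -hwt_mulmx.
have -> : outside :&: [set v | v \notin hyperplane m] = ~: H :\: Ucup.
  apply/setP => v; rewrite !inE -andbA; have [->|] //= := eqVneq v 0.
  by rewrite mem0v !andbF.
have := cardsID Ucup (~: H); rewrite card_compl_hyperplane // setIC -setDE.
by rewrite -card_Ucup_diff => <- <-; rewrite addnCA addnA.
Qed.

Lemma weight_lower m : m != 0 ->
  (#|F| ^ k.-1 <= hwt (m *m G) + \sum_(1 <= i < h.+1) #|F| ^ (\dim (U i)).-1)%N.
Proof.
move=> m_nz; have q1_gt0 := pred_card_gt0 F.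
have le_D : (\sum_(1 <= i < h.+1) #|[set v in U i] :\: [set v in hyperplane m]|
    <= #|F|.-1 * \sum_(1 <= i < h.+1) #|F| ^ (\dim (U i)).-1)%N.
  rewrite big_distrr /=; apply: leq_sum => i _.
  by rewrite card_diff_hyperplane; case: ifP.
rewrite -(leq_pmul2l q1_gt0) mulnDr [(_ * hwt _)%N]mulnC.
apply: leq_trans (leq_addr (h.-1 * #|[set v in U 0%N] :\: [set v in hyperplane m]|) _) _.
by rewrite -weight_defect // leq_add2l.
Qed.

Lemma weight_attained m : (0 < h)%N -> (U 0%N <= hyperplane m)%VS ->
  (forall i, (1 <= i <= h)%N -> ~~ (U i <= hyperplane m)%VS) ->
  (hwt (m *m G) + \sum_(1 <= i < h.+1) #|F| ^ (\dim (U i)).-1 = #|F| ^ k.-1)%N.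
Proof.
move=> h_gt0 U0H UiH; have q1_gt0 := pred_card_gt0 F.
have m_nz : m != 0.
  by apply: contra (UiH 1%N h_gt0) => /eqP ->; rewrite hyperplane0 subvf.
have D_eq : (\sum_(1 <= i < h.+1) #|[set v in U i] :\: [set v in hyperplane m]|
    = #|F|.-1 * \sum_(1 <= i < h.+1) #|F| ^ (\dim (U i)).-1)%N.
  rewrite big_distrr; apply: eq_big_nat => i /andP[i_gt0 le_ih].
  by rewrite card_diff_hyperplane ifN ?UiH ?i_gt0.
apply/eqP; rewrite -(eqn_pmul2l q1_gt0) mulnDr mulnC; apply/eqP.
have := weight_defect m_nz; rewrite /= D_eq card_diff_hyperplane U0H muln0 addn0.
by rewrite [(hwt _ * _)%N]mulnC.
Qed.

Lemma length_count : (0 < h)%N ->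
  (n * #|F|.-1 + #|F| ^ \dim (U 0%N) + \sum_(1 <= i < h.+1) #|F| ^ \dim (U i)
     = #|F| ^ k + h * #|F| ^ \dim (U 0%N))%N.
Proof.
move=> h_gt0; have q_gt0 : (0 < #|F|)%N := ltnW (finNzRing_gt1 F).
have := card_outside_pred (P := predT) (fun _ _ _ => erefl).
have PT : [set v : 'rV[F]_k | predT v] = setT by apply/setP.
have JT : [set j : 'I_n | predT (col j G)^T] = setT by apply/setP.
rewrite PT JT setIT cardsT card_ord => card_out.
have := cardsID Ucup (~: [set 0]); rewrite card_out setIC -setDE => card_nz.
have := cardsC [set 0 : 'rV[F]_k]; rewrite cards1 -card_nz card_mx mul1n => card_all.
have sumE : (\sum_(1 <= i < h.+1) #|F| ^ \dim (U i)
    = \sum_(1 <= i < h.+1) #|[set v in U i] :\: [set 0%R]| + h)%N.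
  rewrite (eq_bigr (fun i => #|[set v in U i] :\: [set 0%R]| + 1)%N) => [|i _].
    by rewrite big_split sum_nat_const_nat subn1 muln1.
  by rewrite card_vspace_diff0 addn1 prednK ?expn_gt0 ?q_gt0.
have := card_Ucup_diff [set 0]; rewrite card_vspace_diff0 sumE => <-.
rewrite -card_all; have := expn_gt0 #|F| (\dim (U 0%N)); rewrite q_gt0.
move: (#|F| ^ _)%N (n * _)%N #|Ucup :\: _| => x N c; case: x => // x _ /=.
by rewrite -[in RHS](prednK h_gt0) mulSn mulnS; lia.
Qed.
End ProjectiveSystem.

Lemma sum_pow_pred_lt (q k h u0 : nat) (u : nat -> nat) : (1 < q)%N ->
  (forall i, (1 <= i <= h)%N -> (u0 < u i)%N) ->
  (q ^ u0)%:Z - 1 + \sum_(1 <= i < h.+1) ((q ^ u i)%:Z - (q ^ u0)%:Z) < (q ^ k - q ^ k.-1)%N%:Z ->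
  (\sum_(1 <= i < h.+1) q ^ (u i).-1 < q ^ k.-1)%N.
Proof.
move=> q_gt1 lt_u0u; have q_gt0 := ltnW q_gt1.
have q1_gt0 : (0 < q.-1)%N by rewrite -ltnS prednK.
have le_term i : (1 <= i <= h)%N -> (q.-1 * q ^ (u i).-1 <= q ^ u i - q ^ u0)%N.
  move=> ih; have ui_gt0 : (0 < u i)%N := leq_ltn_trans (leq0n u0) (lt_u0u i ih).
  have : (q ^ u0 <= q ^ (u i).-1)%N by rewrite leq_pexp2l // -ltnS prednK ?lt_u0u.
  have -> : (q ^ u i = q.-1 * q ^ (u i).-1 + q ^ (u i).-1)%N.
    by rewrite addnC -mulSn prednK // -expnS prednK.
  lia.
have sumD : \sum_(1 <= i < h.+1) ((q ^ u i)%:Z - (q ^ u0)%:Z)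
    = (\sum_(1 <= i < h.+1) (q ^ u i - q ^ u0))%N%:Z.
  rewrite raddf_sum; apply: eq_big_nat => i ih /=; rewrite subzn // leq_pexp2l //.
  by rewrite ltnW ?lt_u0u.
have le_k : (q ^ k - q ^ k.-1 <= q.-1 * q ^ k.-1)%N.
  case: k => [|k]; rewrite ?subnn //= expnS.
  by rewrite -{2}[(q ^ k)%N]mul1n -mulnBl subn1.
have le_S : (q.-1 * \sum_(1 <= i < h.+1) q ^ (u i).-1
    <= \sum_(1 <= i < h.+1) (q ^ u i - q ^ u0))%N.
  rewrite big_distrr /= big_nat_cond [X in (_ <= X)%N]big_nat_cond.
  by apply: leq_sum => i /andP[ih _]; apply: le_term.
rewrite sumD -(ltn_pmul2l q1_gt0) => hyp.
have := expn_gt0 q u0; rewrite q_gt0; lia.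
Qed.

Lemma length_formula_rat (q n K x h : nat) (y : nat -> nat) : (1 < q)%N ->
  (n * q.-1 + x + \sum_(1 <= i < h.+1) y i = K + h * x)%N ->
  (n%:R : rat) = (K%:R - x%:R - \sum_(1 <= i < h.+1) ((y i)%:R - x%:R)) / (q.-1)%:R.
Proof.
move=> q_gt1 /(congr1 (fun t => t%:R : rat)).
rewrite !natrD !natrM natr_sum sumrB sumr_const_nat subSS subn0 => countE.
have q1_nz : (q.-1%:R : rat) != 0 by rewrite pnatr_eq0 -lt0n -ltnS prednK // ltnW.
by apply: (canRL (mulfK q1_nz)); rewrite -[_ *+ h]mulr_natr; move: countE; lra.
Qed.

Lemma hwt0 (F : fieldType) n : hwt (0 : 'rV[F]_n) = 0%N.
Proof. by apply/eqP; rewrite cards_eq0; apply/eqP/setP => j; rewrite !inE mxE eqxx. Qed.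

Lemma row_free_of_weights (F : fieldType) k n (G : 'M[F]_(k, n)) d :
  (0 < d)%N -> (forall m, m != 0 -> (d <= hwt (m *m G))%N) -> row_free G.
Proof.
move=> d_gt0 le_d; apply: inj_row_free => m mG0; apply/eqP; apply: contraTT d_gt0 => /le_d.
by rewrite mG0 hwt0 leqn0 => /eqP ->.
Qed.

Lemma is_min_distance_of_weights (F : fieldType) k n (G : 'M[F]_(k, n)) d m0 :
  (0 < d)%N -> hwt (m0 *m G) = d -> (forall m, m != 0 -> (d <= hwt (m *m G))%N) ->
  is_min_distance G d%:Z.
Proof.
move=> d_gt0 wt_m0 le_d; split.
  exists (m0 *m G); split; first by exists m0.
  by rewrite wt_m0; split=> //; apply: contraTneq d_gt0 => m0G0; rewrite -wt_m0 m0G0 hwt0.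
move=> _ [m ->] mG_nz; rewrite lez_nat le_d //.
by apply: contraNneq mG_nz => ->; rewrite mul0mx.
Qed.

Theorem theorem3p2 (F : finFieldType) (q k h : nat)
  (u : nat -> nat) (U : nat -> {vspace 'rV[F]_k}) (n : nat) (G : 'M[F]_(k, n)) :
  #|F| = q ->
  (3 <= k)%N -> (2 <= h)%N ->
  (1 <= u 0%N)%N -> (u 0%N < u 1%N)%N ->
  (forall i, (1 <= i)%N -> (i < h)%N -> (u i <= u i.+1)%N) ->
  (forall i, (i <= h)%N -> \dim (U i) = u i) ->
  (forall i j, (1 <= i <= h)%N -> (1 <= j <= h)%N -> i != j ->
     (U i :&: U j)%VS = U 0%N) ->
  ((q ^ k - q ^ k.-1)%N%:Z >
     (q ^ u 0%N)%:Z - 1 + \sum_(1 <= i < h.+1) ((q ^ u i)%:Z - (q ^ u 0%N)%:Z)) ->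
  (* columns of G: each is a nonzero vector outside U_1 u ... u U_h *)
  (forall j : 'I_n, (col j G)^T != 0 /\
     forall i, (1 <= i <= h)%N -> (col j G)^T \notin U i) ->
  (* exactly one representative of each class F^* v, v in that set *)
  (forall v : 'rV[F]_k, v != 0 -> (forall i, (1 <= i <= h)%N -> v \notin U i) ->
     exists! j : 'I_n, exists a : F, v = a *: (col j G)^T) ->
  (h <= q ^ (u 1%N - u 0%N))%N ->
  (n%:R : rat) = ((q ^ k)%:R - (q ^ u 0%N)%:R
                  - \sum_(1 <= i < h.+1) ((q ^ u i)%:R - (q ^ u 0%N)%:R)) / (q.-1)%:R
  /\ \rank G = k
  /\ is_min_distance G ((q ^ k.-1)%:Z - \sum_(1 <= i < h.+1) (q ^ (u i).-1)%:Z).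
Proof.
move=> <- _ h_ge2 _ lt_u01 le_u dimU sunflowerU hineq col_outside col_unique le_h.
have h_gt0 : (0 < h)%N := ltnW h_ge2.
have lt_u0 i : (1 <= i <= h)%N -> (u 0%N < u i)%N.
  by move=> ih; apply: leq_trans lt_u01 (nondecreasing_leq le_u ih).
have dimE e : (\sum_(1 <= i < h.+1) #|F| ^ e (\dim (U i)) = \sum_(1 <= i < h.+1) #|F| ^ e (u i))%N.
  by apply: eq_big_nat => i /andP[_ ih]; rewrite dimU.
set S := (\sum_(1 <= i < h.+1) #|F| ^ (u i).-1)%N.
have lt_S : (S < #|F| ^ k.-1)%N := sum_pow_pred_lt (finNzRing_gt1 F) lt_u0 hineq.
have le_wt m : m != 0 -> (#|F| ^ k.-1 - S <= hwt (m *m G))%N.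
  by move=> m_nz; rewrite leq_subLR addnC /S -(dimE predn) weight_lower.
have [m0 [U0H UiH]] : exists m, (U 0%N <= hyperplane m)%VS /\
    forall i, (1 <= i <= h)%N -> ~~ (U i <= hyperplane m)%VS.
  apply: (exists_separating_hyperplane (d := u 1%N)) => //; rewrite ?dimU //.
  - exact: ltnW.
  - by move=> i ih; rewrite dimU ?(nondecreasing_leq le_u ih) //; case/andP: ih.
have wt_m0 : hwt (m0 *m G) = (#|F| ^ k.-1 - S)%N.
  by rewrite -(weight_attained col_outside col_unique sunflowerU h_gt0 U0H UiH) dimE addnK.
have d_gt0 : (0 < #|F| ^ k.-1 - S)%N by rewrite subn_gt0.
split; [|split].
- apply: length_formula_rat (finNzRing_gt1 F) _.
  by rewrite -(dimE id) -(dimU 0%N) // (length_count col_outside col_unique sunflowerU h_gt0).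
- exact/eqP/(row_free_of_weights d_gt0 le_wt).
have <- : (#|F| ^ k.-1 - S)%N%:Z = (#|F| ^ k.-1)%:Z - \sum_(1 <= i < h.+1) (#|F| ^ (u i).-1)%:Z.
  by rewrite -subzn /S ?raddf_sum // ltnW.
exact: is_min_distance_of_weights d_gt0 wt_m0 le_wt.
Qed.
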